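(* Let $k$ be a field of characteristic $0$ or greater than $d$, $d\ge3$, and $(V,\Theta)$ a regular $d$-linear space over $k$ with center $\mathrm{Cent}_k(\Theta)$ and Lie algebra $\mathcal{L}_\Theta$. Let $\psi\in\mathrm{Cent}_k(\Theta)$. Then $[f,g]_\psi:=f\psi g-g\psi f$ defines a Lie algebra structure on the vector space $\mathcal{L}_\Theta$ (in particular $[f,g]_\psi\in\mathcal{L}_\Theta$ for all $f,g\in\mathcal{L}_\Theta$).
   Context: $(V,\Theta)$: $V$ finite-dimensional $k$-space, $\Theta:V^d\to k$ symmetric $d$-linear, regular meaning $\Theta(w,u_2,\dots,u_d)=0\ \forall u_i\Rightarrow w=0$. $\mathrm{Cent}_k(\Theta)=\{f\in\mathrm{End}_k(V):\Theta(fu_1,u_2,\dots,u_d)=\Theta(u_1,fu_2,\dots,u_d)\ \forall u_i\}$. $\mathcal{L}_\Theta=\{L\in\mathfrak{gl}(V):\sum_{i=1}^d\Theta(u_1,\dots,L(u_i),\dots,u_d)=0\ \forall u_i\}$. *)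

From HB Require Import structures.
From mathcomp Require Import all_boot all_order all_algebra fingroup perm.
Set Implicit Arguments. Unset Strict Implicit. Unset Printing Implicit Defensive.
Import Order.TTheory GRing.Theory.
Local Open Scope ring_scope.

Section DLinear.
Variables (k : fieldType) (V : vectType k) (d : nat).

Definition upd (u : {ffun 'I_d -> V}) (i : 'I_d) (x : V) : {ffun 'I_d -> V} :=
  [ffun j => if j == i then x else u j].

Definition dlinear_form (Th : {ffun 'I_d -> V} -> k) : Prop :=
  forall (u : {ffun 'I_d -> V}) (i : 'I_d) (a : k) (x y : V),
    Th (upd u i (a *: x + y)) = a * Th (upd u i x) + Th (upd u i y).

Definition symmetric_dform (Th : {ffun 'I_d -> V} -> k) : Prop :=
  forall (s : 'S_d) (u : {ffun 'I_d -> V}), Th [ffun j => u (s j)] = Th u.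

Definition regular_dform (Th : {ffun 'I_d -> V} -> k) : Prop :=
  forall (i0 : 'I_d), val i0 = 0%N ->
  forall w : V, (forall u : {ffun 'I_d -> V}, Th (upd u i0 w) = 0) -> w = 0.

Definition in_Cent (Th : {ffun 'I_d -> V} -> k) (f : 'End(V)) : Prop :=
  forall (i0 i1 : 'I_d), val i0 = 0%N -> val i1 = 1%N ->
  forall u : {ffun 'I_d -> V},
    Th (upd u i0 (f (u i0))) = Th (upd u i1 (f (u i1))).

Definition in_LTheta (Th : {ffun 'I_d -> V} -> k) (L : 'End(V)) : Prop :=
  forall u : {ffun 'I_d -> V}, \sum_(i < d) Th (upd u i (L (u i))) = 0.

End DLinear.

Definition psi_bracket (k : fieldType) (V : vectType k) (psi f g : 'End(V)) : 'End(V) :=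
  (f \o psi \o g)%VF - (g \o psi \o f)%VF.

Definition char_zero_or_gt (k : fieldType) (d : nat) : Prop :=
  forall p : nat, p \in [pchar k] -> (d < p)%N.

From HB Require Import structures.
From mathcomp Require Import all_boot all_order all_algebra fingroup perm.
Import GRing.Theory.
Local Open Scope ring_scope.

(* The bracket is the commutator of the associative product f * g := f psi g
   on End(V), hence a Lie bracket on all of End(V).  For closure, symmetry of
   Theta lets psi travel between any two slots, not only the first two.
   Writing the defining relation of f in L_Theta at u with u_i replaced by
   psi g u_i, the i-th term of the L_Theta-sum of f psi g becomes minus the sum
   over j <> i of Theta(.. g u_i .. psi f u_j ..); the same double sum arises
   from g psi f, so f psi g - g psi f lies in L_Theta. *)

(* With fgh standing for f psi g psi h, these are the six terms of the Jacobi
   sum; reordered as the cycle fgh, fhg, hfg, hgf, ghf, gfh they telescope. *)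
Lemma Jacobi_cancel (M : zmodType) (fgh fhg ghf hgf gfh hfg : M) :
  (fgh - fhg) - (ghf - hgf) + ((ghf - gfh) - (hfg - fhg))
  + ((hfg - hgf) - (fgh - gfh)) = 0.
Proof.
rewrite !opprB !addrA.
rewrite (ACl ((((((1*2)*(7*8))*(9*10))*(3*4))*(5*6))*(11*12))%AC) /=.
by rewrite !subrKA subrr.
Qed.

Section PsiBracketAlgebra.
Variables (k : fieldType) (V : vectType k) (psi : 'End(V)).
Implicit Types f g h : 'End(V).

Lemma psi_bracketC f g : psi_bracket psi f g = - psi_bracket psi g f.
Proof. by rewrite /psi_bracket opprB. Qed.

Lemma psi_bracketxx f : psi_bracket psi f f = 0.
Proof. exact: subrr. Qed.

Lemma psi_bracketDZl (a : k) f g h :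
  psi_bracket psi (a *: f + g) h = a *: psi_bracket psi f h + psi_bracket psi g h.
Proof.
rewrite /psi_bracket !(comp_lfunDl, comp_lfunDr) -!(comp_lfunZl, comp_lfunZr).
by rewrite scalerBr opprD addrACA.
Qed.

Lemma psi_bracketDZr (a : k) f g h :
  psi_bracket psi h (a *: f + g) = a *: psi_bracket psi h f + psi_bracket psi h g.
Proof. by rewrite psi_bracketC psi_bracketDZl opprD -scalerN -!psi_bracketC. Qed.

Lemma psi_bracket_Jacobi f g h :
  psi_bracket psi f (psi_bracket psi g h) + psi_bracket psi g (psi_bracket psi h f)
  + psi_bracket psi h (psi_bracket psi f g) = 0.
Proof.
rewrite /psi_bracket.
rewrite !(comp_lfunDr, comp_lfunDl, comp_lfunNr, comp_lfunNl, comp_lfunA).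
exact: Jacobi_cancel.
Qed.

End PsiBracketAlgebra.

Lemma perm_map_pair (n : nat) (i0 i1 i j : 'I_n) : i0 != i1 -> i != j ->
  exists s : 'S_n, s i0 = i /\ s i1 = j.
Proof.
move=> ne01 neij; set m := tperm i0 i i1.
have nemi : m != i by rewrite -(tpermL i0 i) (inj_eq perm_inj) eq_sym.
exists (tperm i0 i * tperm m j)%g; rewrite !permM tpermL tpermL.
by rewrite tpermD // eq_sym.
Qed.

Section Slots.
Variables (k : fieldType) (V : vectType k) (d : nat).
Implicit Types (u : {ffun 'I_d -> V}) (i j : 'I_d).

Lemma upd_eq u i x : upd u i x i = x.
Proof. by rewrite ffunE eqxx. Qed.

Lemma upd_neq u i j x : j != i -> upd u i x j = u j.
Proof. by move=> /negbTE ji; rewrite ffunE ji. Qed.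

Lemma upd_upd u i x y : upd (upd u i x) i y = upd u i y.
Proof. by apply/ffunP => j; rewrite !ffunE; case: (j == i). Qed.

Lemma updC u i j x y : i != j -> upd (upd u i x) j y = upd (upd u j y) i x.
Proof.
move=> neij; apply/ffunP => l; rewrite !ffunE.
by case: (eqVneq l j) => [->|//]; rewrite eq_sym (negbTE neij).
Qed.

Lemma upd_perm (s : 'S_d) u i x :
  upd [ffun l => u (s l)] i x = [ffun l => upd u (s i) x (s l)].
Proof. by apply/ffunP => l; rewrite !ffunE (inj_eq perm_inj). Qed.

Variable Th : {ffun 'I_d -> V} -> k.

Lemma dlinear_formB u i x y : dlinear_form Th ->
  Th (upd u i (x - y)) = Th (upd u i x) - Th (upd u i y).
Proof.
by move=> lin; rewrite -[x - y]addrC -scaleN1r lin mulN1r addrC.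
Qed.

Lemma in_LThetaP (L : 'End(V)) u i : in_LTheta Th L ->
  Th (upd u i (L (u i))) = - \sum_(j | j != i) Th (upd u j (L (u j))).
Proof.
by move=> /(_ u); rewrite (bigD1 i) //= => /eqP; rewrite addr_eq0 => /eqP.
Qed.

Lemma in_LTheta_sum_comp (L : 'End(V)) (h : V -> V) u : in_LTheta Th L ->
  \sum_i Th (upd u i (L (h (u i))))
  = - \sum_i \sum_(j | j != i) Th (upd (upd u i (h (u i))) j (L (u j))).
Proof.
move=> HL; rewrite -sumrN; apply: eq_bigr => i _.
set v := upd u i (h (u i)).
have -> : upd u i (L (h (u i))) = upd v i (L (v i)) by rewrite upd_upd upd_eq.
by rewrite in_LThetaP //; congr (- _); apply: eq_bigr => j ji; rewrite upd_neq.
Qed.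

Hypotheses (sym : symmetric_dform Th) (d_gt1 : (1 < d)%N).

Lemma in_Cent_slots (psi : 'End(V)) u i j : in_Cent Th psi -> i != j ->
  Th (upd u i (psi (u i))) = Th (upd u j (psi (u j))).
Proof.
move=> cent neij.
have d_gt0 : (0 < d)%N by apply: ltn_trans d_gt1.
have [s [si sj]] := @perm_map_pair d (Ordinal d_gt0) (Ordinal d_gt1) i j isT neij.
have := cent (Ordinal d_gt0) (Ordinal d_gt1) erefl erefl [ffun l => u (s l)].
by rewrite !upd_perm !ffunE si sj !sym.
Qed.

Lemma in_Cent_transfer (psi : 'End(V)) u i j a b : in_Cent Th psi -> i != j ->
  Th (upd (upd u i (psi a)) j b) = Th (upd (upd u i a) j (psi b)).
Proof.
move=> cent neij; set v := upd (upd u i a) j b.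
have := in_Cent_slots _ v _ _ cent neij.
rewrite /v upd_neq // !upd_eq.
by rewrite upd_upd -updC // upd_upd.
Qed.

Lemma in_LTheta_psi_bracket (psi f g : 'End(V)) :
  dlinear_form Th -> in_Cent Th psi -> in_LTheta Th f -> in_LTheta Th g ->
  in_LTheta Th (psi_bracket psi f g).
Proof.
move=> lin cent Hf Hg u.
under eq_bigr do rewrite /psi_bracket add_lfunE opp_lfunE !comp_lfunE dlinear_formB //.
rewrite sumrB (in_LTheta_sum_comp _ (fun x => psi (g x)) u Hf).
rewrite (in_LTheta_sum_comp _ (fun x => psi (f x)) u Hg).
apply/eqP; rewrite subr_eq0 eqr_opp; apply/eqP.
rewrite (exchange_big_dep xpredT) //=.
apply: eq_bigr => i _; apply: eq_big => j; first by rewrite eq_sym.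
move=> neij; have neji : j != i by rewrite eq_sym.
by rewrite in_Cent_transfer // updC.
Qed.

End Slots.

Theorem proposition2p15 (k : fieldType) (V : vectType k) (d : nat)
    (Th : {ffun 'I_d -> V} -> k) (psi : 'End(V)) :
  char_zero_or_gt k d ->
  (3 <= d)%N ->
  dlinear_form Th -> symmetric_dform Th -> regular_dform Th ->
  in_Cent Th psi ->
  (* closure *)
  (forall f g, in_LTheta Th f -> in_LTheta Th g -> in_LTheta Th (psi_bracket psi f g)) /\
  (* bilinearity *)
  (forall (a : k) f g h, in_LTheta Th f -> in_LTheta Th g -> in_LTheta Th h ->
     psi_bracket psi (a *: f + g) h = a *: psi_bracket psi f h + psi_bracket psi g h /\
     psi_bracket psi h (a *: f + g) = a *: psi_bracket psi h f + psi_bracket psi h g) /\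
  (* alternating *)
  (forall f, in_LTheta Th f -> psi_bracket psi f f = 0) /\
  (* Jacobi identity *)
  (forall f g h, in_LTheta Th f -> in_LTheta Th g -> in_LTheta Th h ->
     psi_bracket psi f (psi_bracket psi g h) + psi_bracket psi g (psi_bracket psi h f)
     + psi_bracket psi h (psi_bracket psi f g) = 0).
Proof.
move=> _ d_ge3 lin sym _ cent.
have d_gt1 : (1 < d)%N by apply: ltn_trans d_ge3.
split; first by move=> f g; apply: in_LTheta_psi_bracket.
split; first by move=> a f g h _ _ _; rewrite psi_bracketDZl psi_bracketDZr.
split; first by move=> f _; apply: psi_bracketxx.
by move=> f g h _ _ _; apply: psi_bracket_Jacobi.
Qed.
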